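(* For every hypergraph $\mathcal{C}$ we have $\operatorname{conn_h}(\operatorname{Ind}(\mathcal{C}))\ge \psi(\mathcal{C})-2$.
   Context: A hypergraph $\mathcal{C}$ on a finite vertex set $V$ is a family of pairwise incomparable subsets of $V$ (its edges), each of cardinality at least $2$; vertices lying in no edge are allowed. The independence complex $\operatorname{Ind}(\mathcal{C})$ is the simplicial complex on $V$ whose faces are the subsets of $V$ containing no edge of $\mathcal{C}$ (if $V=\emptyset$ it is $\{\emptyset\}$). For an edge $F$: $\mathcal{C}-F$ is the hypergraph on $V$ with edge set $\mathcal{C}\setminus\{F\}$; $N_{\mathcal{C}}(F)=\bigcup\{E\setminus F : E\in\mathcal{C},\ |E\setminus F|=1\}$; and $\mathcal{C}:F$ is the hypergraph on $V\setminus(F\cup N_{\mathcal{C}}(F))$ whose edges are the members of cardinality at least $2$ among the inclusion-minimal members of the family $\{E\setminus F : E\in \mathcal{C}-F\}$. The number $\psi(\mathcal{C})\in\mathbb{Z}_{\ge 0}\cup\{\infty\}$ is defined recursively: $\psi(\mathcal{C})=0$ if $V=\emptyset$; $\psi(\mathcal{C})=\infty$ if $V\neq\emptyset$ and $\mathcal{C}$ has no edges; otherwise $\psi(\mathcal{C})=\max_{F\in\mathcal{C}}\min\{\psi(\mathcal{C}-F),\ \psi(\mathcal{C}:F)+|F|-1\}$. The homological connectivity $\operatorname{conn_h}(\Delta)$ is the largest integer $k$ such that $\tilde H_i(\Delta;\mathbb{Z})=0$ for all $i\le k$ ($\infty$ if all vanish; in particular $\operatorname{conn_h}(\{\emptyset\})=-2$).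 *)

From mathcomp Require Import all_boot all_order all_algebra.
Set Implicit Arguments.
Unset Strict Implicit.
Unset Printing Implicit Defensive.
Import GRing.Theory Num.Theory.

(* A hypergraph on a finite vertex set V is given inside an
   ambient finite type T as a pair (V : {set T}, C : {set {set T}}). *)

Section Hyper.
Variable T : finType.

Definition is_hypergraph (V : {set T}) (C : {set {set T}}) : Prop :=
  (forall F, F \in C -> F \subset V) /\
  (forall F, F \in C -> 2 <= #|F|) /\
  (forall F G, F \in C -> G \in C -> F \subset G -> F = G).

Definition Ind (V : {set T}) (C : {set {set T}}) : pred {set T} :=
  fun s => (s \subset V) && [forall E in C, ~~ (E \subset s)].

(* ---------- extended naturals  N u {oo} : None = oo ---------- *)
Definition emax (a b : option nat) : option nat :=
  match a, b with Some x, Some y => Some (maxn x y) | _, _ => None end.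
Definition emin (a b : option nat) : option nat :=
  match a, b with
  | Some x, Some y => Some (minn x y)
  | Some x, None => Some x
  | None, Some y => Some y
  | None, None => None end.
Definition eaddn (a : option nat) (k : nat) : option nat :=
  match a with Some x => Some (x + k) | None => None end.

Definition hdel (C : {set {set T}}) (F : {set T}) : {set {set T}} := C :\ F.
Definition hnbr (C : {set {set T}}) (F : {set T}) : {set T} :=
  \bigcup_(E in C | #|E :\: F| == 1) (E :\: F).
Definition hcolonV (V : {set T}) (C : {set {set T}}) (F : {set T}) : {set T} :=
  V :\: (F :|: hnbr C F).
Definition hcolonE (C : {set {set T}}) (F : {set T}) : {set {set T}} :=
  let S := [set E :\: F | E in C :\ F] in
  [set s in S | [forall s' in S, (s' \subset s) ==> (s' == s)] && (2 <= #|s|)].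

(* psi, computed with fuel; fuel #|V| + #|C| + 1 suffices since both recursive
   calls strictly decrease #|V| + #|C|. *)
Fixpoint psi_fuel (n : nat) (V : {set T}) (C : {set {set T}}) : option nat :=
  match n with
  | 0 => Some 0
  | n'.+1 =>
    if V == set0 then Some 0
    else if C == set0 then None
    else \big[emax/Some 0]_(F in C)
           emin (psi_fuel n' V (hdel C F))
                (eaddn (psi_fuel n' (hcolonV V C F) (hcolonE C F)) (#|F| - 1))
  end.

Definition psi (V : {set T}) (C : {set {set T}}) : option nat :=
  psi_fuel (#|V| + #|C|).+1 V C.

(* ---------- reduced simplicial homology with Z coefficients ----------
   A complex is a predicate on {set T} (its faces, including the empty face).
   Orientation: vertices ordered by enum_rank.  Chains are integer functions
   on {set T}; a k-vertex chain of D is supported on faces of D of size k.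
   The augmented boundary (empty face in degree -1) is
     (bd c) tau = sum_{v notin tau} sign(v, v |: tau) * c (v |: tau). *)
Definition bsign (v : T) (s : {set T}) : int :=
  (-1) ^+ #|[set u in s | enum_rank u < enum_rank v]|.

Definition bd (c : {ffun {set T} -> int}) (tau : {set T}) : int :=
  \sum_(v | v \notin tau) bsign v (v |: tau) * c (v |: tau).

Definition chain_on (D : pred {set T}) (k : nat) (c : {ffun {set T} -> int}) : Prop :=
  forall s, c s != 0 -> D s /\ #|s| = k.

(* \tilde H_{k-1}(D; Z) = 0 *)
Definition rhom_vanish_size (D : pred {set T}) (k : nat) : Prop :=
  forall c, chain_on D k c -> (forall tau, bd c tau = 0) ->
  exists d, chain_on D k.+1 d /\ (forall s, bd d s = c s).

Definition rhom_vanish (D : pred {set T}) (i : int) : Prop :=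
  if (i < -1)%R then True else rhom_vanish_size D `|(i + 1)%R|%N.

(* conn_h(D) >= m, with m = None meaning m = oo *)
Definition conn_h_ge (D : pred {set T}) (m : option int) : Prop :=
  forall i : int, (match m with Some m => (i <= m)%R | None => true end) ->
  rhom_vanish D i.

End Hyper.

From mathcomp Require Import all_boot all_order all_algebra.
From mathcomp Require Import ring zify.
Set Implicit Arguments.
Unset Strict Implicit.
Unset Printing Implicit Defensive.
Import GRing.Theory Num.Theory.

(* An edge F of C can be removed at the price of the faces containing it:
   Ind(C) is Ind(C - F) minus the star of F, and the link of F in Ind(C - F)
   is Ind(C : F).  So a k-cycle z of Ind(C) bounds a chain d in Ind(C - F);
   the part of d on faces containing F, read on the link, is a cycle of
   dimension k + 1 - |F| of Ind(C : F), hence bounds some g there, and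
   d - bd(F * g) fills z inside Ind(C).  Along the recursion defining psi this
   leaves only hypergraphs without edges on a nonempty vertex set, whose
   independence complex is a simplex, hence a cone. *)

Section Chains.
Variable T : finType.
Implicit Types (s t F : {set T}) (u v w : T) (D : pred {set T}).
Local Notation chain := {ffun {set T} -> int}.
Local Open Scope ring_scope.

Lemma card_disjointU (A B : {set T}) :
  [disjoint A & B] -> #|A :|: B|%N = (#|A| + #|B|)%N.
Proof. by move=> dis; apply/eqP; rewrite (leq_card_setU A B). Qed.

Lemma disjointsU1 v t F :
  [disjoint v |: t & F] = (v \notin F) && [disjoint t & F].
Proof. by rewrite -setI_eq0 setIUl setU_eq0 !setI_eq0 disjoints1. Qed.

Lemma setUD_sub F s : F \subset s -> F :|: s :\: F = s.
Proof. by move=> Fs; rewrite -{2}(setID s F) (setIidPr Fs). Qed.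

Lemma disjoint_setD F s : [disjoint s :\: F & F].
Proof. by rewrite disjoints_subset setDE subsetIr. Qed.

Lemma bsign_sq v s : bsign v s * bsign v s = 1.
Proof. by rewrite /bsign -exprD -signr_odd oddD addbb. Qed.

Lemma bsignU v s t :
  [disjoint s & t] -> bsign v (s :|: t) = bsign v s * bsign v t.
Proof.
move=> dis; rewrite /bsign -exprD; congr (_ ^+ _).
set P := fun u => (enum_rank u < enum_rank v)%N.
have -> : [set u in s :|: t | P u] = [set u in s | P u] :|: [set u in t | P u].
  by apply/setP => u; rewrite !inE andb_orl.
by apply: card_disjointU; apply: disjointW dis; apply/subsetP => u;
   rewrite inE => /andP[].
Qed.

Lemma bsign1 v w : bsign v [set w] = (-1) ^+ (enum_rank w < enum_rank v)%N.
Proof.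
rewrite /bsign; congr (_ ^+ _); case: ltnP => wv.
  rewrite (_ : [set _ in _ | _] = [set w]) ?cards1 //.
  by apply/setP => u; rewrite !inE; case: eqP => // ->.
apply/eqP; rewrite cards_eq0; apply/eqP/setP => u; rewrite !inE.
by case: eqP => // ->; rewrite ltnNge wv.
Qed.

Lemma bsignU1 v w s :
  w \notin s -> bsign v (w |: s) = bsign v [set w] * bsign v s.
Proof. by move=> ws; rewrite bsignU // disjoints1. Qed.

Lemma bsign_self v s : v \notin s -> bsign v (v |: s) = bsign v s.
Proof. by move=> vs; rewrite bsignU1 // bsign1 ltnn mul1r. Qed.

Lemma bsign1C v w : v != w -> bsign v [set w] = - bsign w [set v].
Proof.
move=> vw; rewrite !bsign1.
have : enum_rank v != enum_rank w by apply: contra vw => /eqP/enum_rank_inj ->.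
by case: ltngtP => [_ _|_ _|/val_inj ->]; rewrite ?eqxx // expr0 expr1 ?opprK.
Qed.

Definition bdf (c : chain) : chain := [ffun s : {set T} => bd c s].

Lemma bd_bdf (c : chain) t : bd (bdf c) t = 0.
Proof.
pose f v w := if (v \notin t) && (w \notin t) && (w != v) then
   bsign v (v |: t) * bsign w (w |: (v |: t)) * c (w |: (v |: t)) else 0.
have -> : bd (bdf c) t = \sum_v \sum_w f v w.
  rewrite /bd big_mkcond; apply: eq_bigr => v _; rewrite /f ffunE /bd.
  case vt: (v \notin t) => /=; last by rewrite big1.
  rewrite mulr_sumr big_mkcond; apply: eq_bigr => w _; rewrite !inE negb_or.
  by case: (w \notin t); case: (w != v); rewrite /= ?mulr0 // mulrA.
(* Each 2-face w |: v |: t is reached twice, with opposite signs. *)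
have fN v w : f w v = - f v w.
  rewrite /f; case vt: (v \notin t); case wt: (w \notin t);
    rewrite /= ?oppr0 //.
  have [->|vw] := eqVneq v w; first by rewrite oppr0.
  have vwt : v \notin w |: t by rewrite !inE negb_or vw vt.
  have wvt : w \notin v |: t by rewrite !inE negb_or eq_sym vw wt.
  rewrite /= (bsign_self vwt) (bsign_self wvt) (bsign_self vt).
  rewrite (bsign_self wt) (bsignU1 _ wt) (bsignU1 _ vt) setUCA (bsign1C vw).
  ring.
have : \sum_v \sum_w f v w = - \sum_v \sum_w f v w.
  rewrite [LHS]exchange_big /= -sumrN; apply: eq_bigr => v _.
  by rewrite -sumrN; apply: eq_bigr => w _; apply: fN.
set S := \sum_v _; lia.
Qed.

Lemma bdB (a b : chain) t :
  bd [ffun s : {set T} => a s - b s] t = bd a t - bd b t.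
Proof. by rewrite /bd -sumrB; apply: eq_bigr => v _; rewrite ffunE mulrBr. Qed.

Lemma bd_neq0 (c : chain) t :
  bd c t != 0 -> exists2 v, v \notin t & c (v |: t) != 0.
Proof.
move=> nz; apply/exists_inP; apply: contraNT nz; rewrite negb_exists_in.
by move=> /forall_inP c0; apply/eqP/big1 => v /c0 /negPn/eqP ->; rewrite mulr0.
Qed.

Lemma chain_onB D k (a b : chain) :
  chain_on D k a -> chain_on D k b ->
  chain_on D k [ffun s : {set T} => a s - b s].
Proof.
move=> a_on b_on s; rewrite ffunE.
have [/a_on //|/negPn/eqP ->] := boolP (a s != 0).
by rewrite sub0r oppr_eq0 => /b_on.
Qed.

Lemma chain_on_bdf D k (c : chain) :
  (forall s t, D s -> t \subset s -> D t) ->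
  chain_on D k.+1 c -> chain_on D k (bdf c).
Proof.
move=> Dsub c_on s; rewrite ffunE => /bd_neq0 [v vs /c_on [Dvs kvs]].
split; first exact: Dsub Dvs (subsetUr _ _).
by move: kvs; rewrite cardsU1 vs => -[].
Qed.

Definition cone (x : T) (c : chain) : chain :=
  [ffun s : {set T} => if x \in s then bsign x s * c (s :\ x) else 0].

Lemma bd_cone x (c : chain) :
  (forall t, bd c t = 0) -> forall t, bd (cone x c) t = c t.
Proof.
move=> c_cyc t; case xt: (x \in t); last first.
  rewrite /bd (bigD1 x) ?xt //= big1 ?addr0; last first.
    by move=> v /andP[vt vx]; rewrite ffunE !inE eq_sym (negbTE vx) xt mulr0.
  by rewrite ffunE setU11 setU1K ?xt // mulrA bsign_sq mul1r.
have [t' xt' ->] : exists2 t' : {set T}, x \notin t' & t = x |: t'.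
  by exists (t :\ x); [rewrite setD11 | rewrite setD1K].
set S := \sum_(v | v \notin x |: t') bsign v t' * c (v |: t').
have bd_cone_t : bd (cone x c) (x |: t') = - bsign x t' * S.
  rewrite /bd /S mulr_sumr; apply: eq_bigr => v vt.
  have vx : v != x by apply: contraNneq vt => ->; rewrite setU11.
  have vt' : v \notin t' by move: vt; rewrite !inE negb_or => /andP[].
  rewrite ffunE !inE eqxx orbT.
  have -> : (v |: (x |: t')) :\ x = v |: t'.
    by rewrite setUCA setU1K // !inE negb_or eq_sym vx.
  rewrite (bsign_self vt) (bsignU1 _ vt) (bsignU1 v xt') (bsign_self xt').
  rewrite (bsign1C vx) -[RHS]mul1r -(bsign_sq x [set v]); ring.
have bd_c_t : bd c t' = bsign x t' * c (x |: t') + S.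
  rewrite /bd (bigD1 x) //= (bsign_self xt'); congr (_ + _).
  apply: eq_big => [v|v /andP[vt _]]; first by rewrite !inE negb_or andbC.
  by rewrite bsign_self.
have S_eq : S = - (bsign x t' * c (x |: t')).
  by apply/eqP; rewrite -addr_eq0 addrC -bd_c_t c_cyc.
by rewrite bd_cone_t S_eq mulNr mulrN opprK mulrA bsign_sq mul1r.
Qed.

Lemma rhom_vanish_size_cone D x k :
  (forall s, D s -> D (x |: s)) -> rhom_vanish_size D k.
Proof.
move=> Dx c c_on c_cyc; exists (cone x c); split; last exact: bd_cone.
move=> s; rewrite ffunE; case: ifP => xs; last by rewrite eqxx.
move=> nz; have /c_on [Ds ks] : c (s :\ x) != 0.
  by apply: contraNneq nz => ->; rewrite mulr0.
split; first by rewrite -(setD1K xs); apply: Dx.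
by rewrite (cardsD1 x) xs ks.
Qed.

Definition join_sign F t : int := \prod_(w in t) bsign w F.

Lemma join_signU1 F v t :
  v \notin t -> join_sign F (v |: t) = bsign v F * join_sign F t.
Proof. by move=> vt; rewrite /join_sign big_setU1. Qed.

Lemma join_sign_sq F t : join_sign F t * join_sign F t = 1.
Proof.
by rewrite /join_sign -big_split /= big1 // => w _; rewrite bsign_sq.
Qed.

Lemma bsign_join F v t : v \notin F -> v \notin t -> [disjoint F & t] ->
  bsign v (v |: (F :|: t)) = bsign v F * bsign v (v |: t).
Proof.
move=> vF vt dis; rewrite setUCA bsignU //.
by rewrite disjoint_sym disjointsU1 vF disjoint_sym.
Qed.

(* [link_chain F c] reads the part of [c] on faces containing [F] as a chain
   on the link of [F]; [join_chain F c] is the join of [F] with [c].  The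
   signs make both commute with [bd] up to the sign [join_sign F t]. *)
Definition link_chain F (c : chain) : chain :=
  [ffun t : {set T} =>
     if [disjoint t & F] then join_sign F t * c (F :|: t) else 0].

Definition join_chain F (c : chain) : chain :=
  [ffun s : {set T} =>
     if F \subset s then join_sign F (s :\: F) * c (s :\: F) else 0].

Lemma bd_link_chain F (c : chain) t : [disjoint t & F] ->
  bd (link_chain F c) t = join_sign F t * bd c (F :|: t).
Proof.
move=> dis; rewrite /bd mulr_sumr [LHS]big_mkcond [RHS]big_mkcond.
apply: eq_bigr => v _; rewrite ffunE !inE negb_or.
case vt: (v \in t) => /=; first by rewrite andbF.
case vF: (v \in F) => /=.
  by rewrite disjointsU1 vF mulr0.
rewrite disjointsU1 vF dis /= bsign_join ?vF ?vt 1?disjoint_sym //.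
by rewrite join_signU1 ?vt // setUCA; ring.
Qed.

Lemma bd_join_chain F (c : chain) t : [disjoint t & F] ->
  (forall s, ~~ [disjoint s & F] -> c s = 0) ->
  bd (join_chain F c) (F :|: t) = join_sign F t * bd c t.
Proof.
move=> dis c0; rewrite /bd mulr_sumr [LHS]big_mkcond [RHS]big_mkcond.
apply: eq_bigr => v _; rewrite ffunE !inE negb_or.
case vt: (v \in t) => /=; first by rewrite andbF.
case vF: (v \in F) => /=.
  by rewrite c0 ?mulr0 // disjointsU1 vF.
rewrite setUCA subsetUl.
have -> : (F :|: (v |: t)) :\: F = v |: t.
  rewrite setDUl setDv set0U; apply/setDidPl.
  by rewrite disjointsU1 vF.
rewrite -setUCA bsign_join ?vF ?vt 1?disjoint_sym // join_signU1 ?vt //.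
rewrite -[RHS]mul1r -(bsign_sq v F); ring.
Qed.

End Chains.

Section LinkExtension.
Variables (T : finType) (D0 D1 D2 : pred {set T}) (F : {set T}).
Implicit Types s t : {set T}.
Local Notation chain := {ffun {set T} -> int}.
Local Open Scope ring_scope.

(* [D0] is the complex [D1] minus the star of [F]; [D2] is the link of [F]. *)
Hypothesis D1_closed : forall s t, D1 s -> t \subset s -> D1 t.
Hypothesis D0E : forall s, D0 s = D1 s && ~~ (F \subset s).
Hypothesis D2E : forall t, D2 t = [disjoint t & F] && D1 (F :|: t).

Lemma chain_on_D0 k (c : chain) :
  chain_on D1 k c -> (forall s, F \subset s -> c s = 0) -> chain_on D0 k c.
Proof.
move=> c_on cF s nz; have [D1s ks] := c_on s nz.
by rewrite D0E D1s; split=> //; apply: contra nz => /cF ->.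
Qed.

Lemma chain_on_link k (d : chain) :
  chain_on D1 k d -> chain_on D2 (k - #|F|) (link_chain F d).
Proof.
move=> d_on t; rewrite ffunE; case: ifP => dis; last by rewrite eqxx.
move=> nz; have /d_on [D1Ft kFt] : d (F :|: t) != 0.
  by apply: contraNneq nz => ->; rewrite mulr0.
rewrite D2E dis D1Ft; split=> //.
by rewrite -kFt card_disjointU 1?disjoint_sym // addKn.
Qed.

Lemma link_chain_cycle k (c d : chain) : chain_on D0 k c ->
  (forall s, bd d s = c s) -> forall t, bd (link_chain F d) t = 0.
Proof.
move=> c_on bd_d t; have [dis|ndis] := boolP [disjoint t & F].
  rewrite bd_link_chain // bd_d.
  have [-> |/c_on[]] := eqVneq (c (F :|: t)) 0; first by rewrite mulr0.
  by rewrite D0E subsetUl andbF.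
rewrite /bd big1 // => v _; rewrite ffunE ifF ?mulr0 //.
by apply: contraNF ndis; rewrite disjointsU1 => /andP[].
Qed.

Lemma chain_on_join k (g : chain) : (#|F| <= k)%N ->
  chain_on D2 (k - #|F|) g -> chain_on D1 k (join_chain F g).
Proof.
move=> Fk g_on s; rewrite ffunE; case: ifP => Fs; last by rewrite eqxx.
move=> nz; have /g_on [] : g (s :\: F) != 0.
  by apply: contraNneq nz => ->; rewrite mulr0.
rewrite D2E (setUD_sub Fs) => /andP[_ D1s] ks; split=> //.
rewrite -(setUD_sub Fs) card_disjointU 1?disjoint_sym ?disjoint_setD //.
by rewrite ks subnKC.
Qed.

Lemma rhom_vanish_size_link k : rhom_vanish_size D1 k ->
  ((#|F| <= k.+1)%N -> rhom_vanish_size D2 (k.+1 - #|F|)) ->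
  rhom_vanish_size D0 k.
Proof.
move=> van1 van2 c c_on c_cyc.
have c_on1 : chain_on D1 k c by move=> s /c_on []; rewrite D0E => /andP[].
have [d [d_on bd_d]] := van1 c c_on1 c_cyc.
have [F_small|F_big] := leqP #|F| k.+1; last first.
  exists d; split=> //; apply: chain_on_D0 => // s Fs; apply/eqP.
  by apply: contraTT F_big => /d_on [_ <-]; rewrite -leqNgt subset_leq_card.
have [g [g_on bd_g]] :=
  van2 F_small _ (chain_on_link d_on) (link_chain_cycle c_on bd_d).
rewrite -subSn // in g_on.
have g0 s : ~~ [disjoint s & F] -> g s = 0.
  move=> ndis; apply/eqP; apply: contraNT ndis.
  by move=> /g_on []; rewrite D2E => /andP[].
exists [ffun s => d s - bdf (join_chain F g) s]; split; last first.
  by move=> s; rewrite bdB bd_d bd_bdf subr0.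
have bd_join_on := chain_on_bdf D1_closed (chain_on_join (leqW F_small) g_on).
apply: chain_on_D0; first exact: chain_onB d_on bd_join_on.
move=> s Fs; have bd_join : bd (join_chain F g) s = d s.
  rewrite -{1}(setUD_sub Fs) bd_join_chain ?disjoint_setD // bd_g ffunE.
  by rewrite disjoint_setD mulrA join_sign_sq mul1r setUD_sub.
by rewrite !ffunE bd_join subrr.
Qed.

End LinkExtension.

Section Hypergraph.
Variable T : finType.
Implicit Types (V F E s t : {set T}) (C : {set {set T}}).

Lemma IndP V C s :
  reflect (s \subset V /\ forall E, E \in C -> ~~ (E \subset s)) (Ind V C s).
Proof.
by apply: (iffP andP) => -[sV noE]; split=> //; apply/forall_inP.
Qed.

Lemma Ind_closed V C s t : Ind V C s -> t \subset s -> Ind V C t.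
Proof.
move=> /IndP[sV noE] ts; apply/IndP; split; first exact: subset_trans ts sV.
by move=> E /noE; apply: contra => Et; apply: subset_trans Et ts.
Qed.

Lemma hnbrP C F u :
  reflect (exists2 E, E \in C & E :\: F = [set u]) (u \in hnbr C F).
Proof.
apply: (iffP bigcupP) => [[E /andP[EC /cards1P[w Ew]] uE]|[E EC Eu]].
  by exists E => //; move: uE; rewrite Ew inE => /eqP ->.
by exists E; [rewrite EC Eu cards1 | rewrite Eu set11].
Qed.

Lemma edge_setD1 C F E u : E \in C -> E :\: F = [set u] -> E \in C :\ F.
Proof.
move=> EC Eu; apply/setD1P; split=> //; apply/eqP => EF.
by move: Eu; rewrite EF setDv => /setP/(_ u); rewrite !inE eqxx.
Qed.

Definition hcolon_family C F := [set E :\: F | E in C :\ F].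

Lemma hcolonEP C F s :
  reflect (minset (fun A => A \in hcolon_family C F) s /\ (2 <= #|s|)%N)
          (s \in hcolonE C F).
Proof.
rewrite inE; apply: (iffP andP) => [[sS /andP[/forall_inP smin s2]]|].
  by split=> //; apply/minsetP; split=> // s' /smin /implyP sub /sub /eqP.
move=> [/minsetP[sS smin] s2]; split=> //; apply/andP; split=> //.
by apply/forall_inP => s' /smin sub; apply/implyP => /sub ->.
Qed.

Lemma card_hcolonV V C F : (#|hcolonV V C F| <= #|V|)%N.
Proof. exact/subset_leq_card/subsetDl. Qed.

Lemma card_hcolonE C F : (#|hcolonE C F| <= #|C :\ F|)%N.
Proof.
apply: leq_trans (leq_imset_card (fun E => E :\: F) _).
by apply/subset_leq_card/subsetP => s /hcolonEP[/minsetP[]].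
Qed.

Variables (V : {set T}) (C : {set {set T}}).
Hypothesis hyp : is_hypergraph V C.

Lemma hypergraph_hdel F : is_hypergraph V (C :\ F).
Proof.
case: hyp => HV [H2 Hanti]; split; [|split].
- by move=> E /setD1P[_ /HV].
- by move=> E /setD1P[_ /H2].
- by move=> E G /setD1P[_ EC] /setD1P[_ GC]; apply: Hanti.
Qed.

Lemma hypergraph_hcolon F : is_hypergraph (hcolonV V C F) (hcolonE C F).
Proof.
case: hyp => HV _; split; last split.
- move=> s /hcolonEP[/minsetP[/imsetP[E /setD1P[_ EC] ->] smin] s2].
  apply/subsetP => u /setDP[uE uF].
  rewrite /hcolonV !inE negb_or uF (subsetP (HV E EC)) //= andbT.
  apply/hnbrP => -[E' E'C E'u].
  have := smin _ (imset_f _ (edge_setD1 E'C E'u)).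
  rewrite E'u sub1set !inE uE uF => /(_ isT) su.
  by rewrite -su cards1 in s2.
- by move=> s /hcolonEP[].
- move=> s s' /hcolonEP[/minsetP[sS _] _] /hcolonEP[/minsetP[_ smin] _].
  exact: smin.
Qed.

Variable F : {set T}.
Hypothesis FC : F \in C.

Lemma hcolon_familyW s : s \in hcolon_family C F ->
  (exists2 A, A \in hcolonE C F & A \subset s) \/
  (exists2 u, u \in hnbr C F & u \in s).
Proof.
move=> sS; have [A minA As] :=
  minset_exists (P := fun A => A \in hcolon_family C F) sS.
have [A2|A1] := leqP 2 #|A|; first by left; exists A => //; apply/hcolonEP.
case/minsetP: minA => /imsetP[E EF AE] _.
have /cards1P[u Au] : #|A| == 1%N.
  case: hyp => _ [_ Hanti]; move: EF => /setD1P[EF EC].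
  rewrite eqn_leq -ltnS A1 card_gt0 AE setD_eq0.
  by apply: contra EF => /(Hanti _ _ EC FC) ->.
right; exists u; last by rewrite (subsetP As) // Au set11.
by apply/hnbrP; exists E; [case/setD1P: EF | rewrite -AE].
Qed.

Lemma Ind_setD1E s : Ind V C s = Ind V (C :\ F) s && ~~ (F \subset s).
Proof.
apply/idP/andP => [/IndP[sV noE]|[/IndP[sV noE] nFs]].
  by split; [apply/IndP; split=> // E /setD1P[_ /noE] | exact: noE].
apply/IndP; split=> // E EC; have [-> //|EF] := eqVneq E F.
by apply: noE; rewrite !inE EF.
Qed.

Lemma Ind_hcolonE t : Ind (hcolonV V C F) (hcolonE C F) t =
  [disjoint t & F] && Ind V (C :\ F) (F :|: t).
Proof.
apply/idP/andP => [/IndP[tV noE]|[dis /IndP[FtV noE]]].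
  have t_ok u : u \in t -> [/\ u \in V, u \notin F & u \notin hnbr C F].
    move=> /(subsetP tV); rewrite !inE negb_or.
    by case/andP=> /andP[uF uN] uV; split.
  split.
    by rewrite disjoints_subset; apply/subsetP => u /t_ok[_ uF _]; rewrite inE.
  apply/IndP; split=> [|E EF].
    case: hyp => /(_ F FC) FV _; rewrite subUset FV.
    by apply/subsetP => u /t_ok[].
  apply/negP; rewrite -subDset => EDt.
  have [[A /noE/negP AnE AE]|[u uN /(subsetP EDt) /t_ok[_ _ /negP //]]] :=
    hcolon_familyW (imset_f _ EF).
  exact/AnE/(subset_trans AE).
apply/IndP; split=> [|s /hcolonEP[/minsetP[/imsetP[E EF ->] _] _]]; last first.
  by apply: contra (noE E EF); rewrite subDset.
apply/subsetP => u ut.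
have uV : u \in V by apply: (subsetP FtV); rewrite inE ut orbT.
rewrite /hcolonV !inE negb_or (disjointFr dis ut) uV andbT /=.
apply/hnbrP => -[E EC Eu]; move/negP: (noE E (edge_setD1 EC Eu)); apply.
by rewrite -subDset Eu sub1set.
Qed.

Lemma rhom_vanish_size_Ind k :
  rhom_vanish_size (Ind V (C :\ F)) k ->
  ((#|F| <= k.+1)%N ->
   rhom_vanish_size (Ind (hcolonV V C F) (hcolonE C F)) (k.+1 - #|F|)) ->
  rhom_vanish_size (Ind V C) k.
Proof.
by apply: rhom_vanish_size_link;
  [exact: Ind_closed | exact: Ind_setD1E | exact: Ind_hcolonE].
Qed.

End Hypergraph.

Definition le_opt (a : nat) (o : option nat) : Prop :=
  if o is Some p then (a <= p)%N else True.

Lemma le_opt_emin a x y : le_opt a (emin x y) -> le_opt a x /\ le_opt a y.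
Proof. by case: x y => [x|] [y|] //=; rewrite leq_min => /andP[]. Qed.

Lemma le_opt_bigmax (I : finType) (P : pred I) (f : I -> option nat) a :
  (0 < a)%N -> le_opt a (\big[emax/Some 0]_(i | P i) f i) ->
  exists2 i, P i & le_opt a (f i).
Proof.
move=> a0.
apply: (big_rec (fun x => le_opt a x -> exists2 i, P i & le_opt a (f i))).
  by rewrite /= leqNgt a0.
move=> i x Pi IH; case fi: (f i) => [p|]; last by exists i; rewrite ?fi.
case: x IH => [q|] IH /=; last exact: IH.
by rewrite leq_max => /orP[ap|/IH //]; exists i; rewrite ?fi.
Qed.

Lemma psi_fuel_rhom_vanish (T : finType) n (V : {set T}) (C : {set {set T}})
    k :
  is_hypergraph V C -> (#|V| + #|C| < n)%N -> le_opt k.+1 (psi_fuel n V C) ->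
  rhom_vanish_size (Ind V C) k.
Proof.
elim: n V C k => [//|n IH] V C k hyp size_lt /=.
case: ifP => // /negbT/set0Pn[x xV].
case: ifP => [/eqP -> _|_].
  apply: (rhom_vanish_size_cone (x := x)) => s /IndP[sV _].
  by apply/IndP; split=> [|E]; rewrite ?inE // subUset sub1set xV.
move=> /(le_opt_bigmax (ltn0Sn k)) [F FC] /le_opt_emin [psi_del psi_colon].
have size_del : (#|V| + #|C :\ F| < n)%N.
  by move: size_lt; rewrite (cardsD1 F C) FC add1n addnS ltnS.
apply: (rhom_vanish_size_Ind hyp FC).
  exact: IH _ _ _ (hypergraph_hdel hyp F) size_del psi_del.
move=> F_small; apply: IH _ _ _ (hypergraph_hcolon hyp F) _ _.
  apply: leq_ltn_trans size_del.
  exact: leq_add (card_hcolonV V C F) (card_hcolonE C F).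
have F2 : (2 <= #|F|)%N by case: hyp => _ [/(_ F FC)].
by move: psi_colon; case: psi_fuel => [q|] //=; lia.
Qed.

Theorem corollary3p3 (T : finType) (V : {set T}) (C : {set {set T}}) :
  is_hypergraph V C ->
  conn_h_ge (Ind V C) (omap (fun p : nat => (p%:Z - 2)%R) (psi V C)).
Proof.
move=> hyp i i_le; rewrite /rhom_vanish; case: ifP => // i_ge.
apply: (psi_fuel_rhom_vanish hyp (ltnSn _)).
move: i_le; rewrite /psi; case: psi_fuel => [p|] //= i_le.
by move/negbT: i_ge; move: i_le; lia.
Qed.
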